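(* Let $G$ be a finite group with $|G|=p^\alpha q$, where $p$ and $q$ are primes and $p$ divides $|G|$. Then $\mathcal{A}_p(G)'/G$, $\mathcal{S}_p(G)'/G$ and $\mathcal{B}_p(G)'/G$ are all contractible finite spaces.
   Context: $\mathcal{S}_p(G)$ is the poset of non-trivial $p$-subgroups of $G$, $\mathcal{A}_p(G)$ its subposet of non-trivial elementary abelian $p$-subgroups, $\mathcal{B}_p(G)=\{P\in\mathcal{S}_p(G):P=\mathcal{O}_p(N_G(P))\}$ ($\mathcal{O}_p(H)$ = largest normal $p$-subgroup). $G$ acts by conjugation. For a poset $X$, $X'$ is the poset of non-empty chains ordered by inclusion with componentwise $G$-action; $X'/G$ is the orbit poset ($\overline{c}\le\overline{d}$ iff some representatives satisfy $c_1\subseteq d_1$). Finite posets are finite $T_0$ spaces whose open sets are the down-sets. *)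

From HB Require Import structures.
From mathcomp Require Import all_boot all_order all_algebra all_fingroup all_solvable.
From mathcomp Require Import all_classical all_reals.
From mathcomp Require Import topology.
From mathcomp Require Import Rstruct Rstruct_topology.
From Stdlib Require Rdefinitions.

Set Implicit Arguments.
Unset Strict Implicit.
Unset Printing Implicit Defensive.

Local Open Scope classical_set_scope.

(* Finite posets as finite T0 spaces: open sets are the down-sets.     *)

Definition finspace (T : choiceType) (le : rel T) : Type := T.

HB.instance Definition _ (T : choiceType) (le : rel T) :=
  Choice.on (finspace le).

Definition downset_open (T : choiceType) (le : rel T) : set_system (finspace le) :=
  fun A => forall x y : T, A x -> le y x -> A y.
Arguments downset_open {T} le _.

Lemma downset_openT (T : choiceType) (le : rel T) : downset_open le setT.
Proof. by []. Qed.

Lemma downset_openI (T : choiceType) (le : rel T) : setI_closed (downset_open le).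
Proof. by move=> A B oA oB x y [Ax Bx] yx; split; [exact: oA _ _ Ax yx|exact: oB _ _ Bx yx]. Qed.

Lemma downset_open_bigU (T : choiceType) (le : rel T) (I : Type)
  (f : I -> set (finspace le)) :
  (forall i, downset_open le (f i)) -> downset_open le (\bigcup_i f i).
Proof. by move=> of_ x y [i _ fx] yx; exists i => //; exact: of_ _ _ _ fx yx. Qed.

HB.instance Definition _ (T : choiceType) (le : rel T) :=
  isOpenTopological.Build (finspace le)
    (@downset_openT T le) (@downset_openI T le) (@downset_open_bigU T le).

Local Open Scope ring_scope.

Definition contractible (X : topologicalType) : Prop :=
  exists (x0 : X) (H : X * Rdefinitions.R -> X),
    {within [set: X] `*` `[0%R, 1%R], continuous H} /\
    (forall x, H (x, 0%R) = x) /\ (forall x, H (x, 1%R) = x0).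

Local Close Scope ring_scope.

Local Close Scope classical_set_scope.
Section PSubgroupPosets.
Variable gT : finGroupType.
Implicit Types (G : {group gT}) (p : nat).
Local Open Scope group_scope.

Definition Sp p G : {set {set gT}} :=
  [set P : {set gT} | [&& group_set P, P \subset G, p.-group P & P != 1]].

Definition Ap p G : {set {set gT}} :=
  [set P in Sp p G | p.-abelem P].

Definition Bp p G : {set {set gT}} :=
  [set P in Sp p G | P == 'O_p('N_G(P))].

Definition chains (X : {set {set gT}}) : {set {set {set gT}}} :=
  [set c : {set {set gT}} | [&& c != finset.set0, c \subset X &
     [forall a in c, forall b in c, (a \subset b) || (b \subset a)]]].

Definition conj_chain (c : {set {set gT}}) (g : gT) : {set {set gT}} :=
  [set P :^ g | P in c].

Definition chain_orbit G (c : {set {set gT}}) : {set {set {set gT}}} :=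
  [set conj_chain c g | g in G].

(* the points of X'/G : the G-orbits of non-empty chains of X *)
Definition orbits G (X : {set {set gT}}) : {set {set {set {set gT}}}} :=
  [set chain_orbit G c | c in chains X].

Definition orbit_pt G (X : {set {set gT}}) : Type :=
  {O : {set {set {set gT}}} | O \in orbits G X}.

Definition orbit_le G (X : {set {set gT}}) : rel (orbit_pt G X) :=
  fun O D => [exists c in val O, exists d in val D, c \subset d].

Definition orbit_space G (X : {set {set gT}}) : topologicalType :=
  finspace (@orbit_le G X).

End PSubgroupPosets.

(* Write D = O_p(G). For |G| = p^a q two distinct Sylow p-subgroups of G meet inside D:
   in G/D a minimal normal subgroup M has order q, so one Sylow subgroup is conjugate to
   the other by an element of M, and their intersection centralizes M.  Hence, if D = 1,
   every non-trivial p-subgroup H lies in a unique Sylow subgroup S(H), and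
   H <= H F(S(H)) >= F(S(H)), with F = id for S_p and B_p and F = Omega_1 Z for A_p, ends at
   a map constant on G-orbits.  If D <> 1 one uses H <= HD >= D for S_p, D <= H for
   p-radical H, and a four-step zigzag through Omega_1(Z(D)) for A_p.
   All these maps of X are monotone and commute with conjugation, so they act on X'/G.
   Two such maps f <= g induce maps of X'/G joined by a zigzag of comparable maps (apply f
   to the small members of a chain and g to the large ones, and raise the threshold one
   order at a time), and comparable maps of a finite T0 space are homotopic.  So the
   identity of X'/G is homotopic to a constant map. *)

From mathcomp Require Import all_boot all_order all_algebra all_fingroup all_solvable.
From mathcomp Require Import all_classical all_reals topology.
From mathcomp Require Import Rstruct Rstruct_topology lra.
From mathcomp Require Import integral_char.
From Stdlib Require Import Relation_Operators Operators_Properties.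
(* Re-imported so that [set0], [subsetP], ... of fintype/finset shadow those of classical_sets. *)
From mathcomp Require Import fintype finset.

Set Implicit Arguments.
Unset Strict Implicit.
Unset Printing Implicit Defensive.

Import Order.TTheory GRing.Theory Num.Theory.

Section NearbyPoints.
Variable R : realFieldType.
Local Open Scope ring_scope.

Lemma exists_sep_radius (l : seq R) (s : R) :
  exists2 d : R, 0 < d & forall a, a \in l -> a != s -> d <= `|s - a|.
Proof.
elim: l => [|b l [d d_gt0 sep_d]]; first by exists 1.
have [->|bs] := eqVneq b s.
  by exists d => // a; rewrite inE => /orP[/eqP->|/sep_d]; [rewrite eqxx|].
exists (Num.min d `|s - b|); first by rewrite lt_min d_gt0 normr_gt0 subr_eq0 eq_sym.
move=> a; rewrite inE => /orP[/eqP-> _|al aS]; first by rewrite ge_min lexx orbT.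
by rewrite ge_min sep_d.
Qed.

Lemma ltr_stable_near (a s s' : R) :
  `|s - s'| < `|s - a| -> (a < s') = (a < s) /\ s' != a.
Proof.
have [as_|sa|->] := ltgtP a s; last by rewrite subrr normr0 normr_lt0.
- rewrite [`|s - a|]ger0_norm ?subr_ge0 ?(ltW as_) // ltr_norml => /andP[h1 h2].
  by split; [apply/idP; lra | apply/eqP; lra].
- rewrite [`|s - a|]ltr0_norm ?subr_lt0 // ltr_norml => /andP[h1 h2].
  by split; [apply/negbTE; rewrite -leNgt; lra | apply/eqP; lra].
Qed.

End NearbyPoints.

Lemma count_ltn_iota0 (j n : nat) : j <= n -> count (fun i => i < j) (iota 0 n) = j.
Proof.
move=> jn; rewrite -(subnKC jn) iotaD count_cat add0n.
rewrite (@eq_in_count _ _ predT); last by move=> i; rewrite mem_iota.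
rewrite count_predT size_iota (@eq_in_count _ _ pred0) ?count_pred0 ?addn0 //.
by move=> i; rewrite mem_iota => /andP[/leq_gtF ->].
Qed.

Section Staircase.
Local Open Scope ring_scope.
Local Notation R := Rdefinitions.R.
Variable m : nat.

(* The zigzag homotopy through [m] stage maps uses the [i]-th one around time [i / m];
   [stage t] counts the midpoints [i + 1/2] passed at the rescaled time [t * m]. *)
Definition midpoint (i : nat) : R := i%:R + 2^-1.

Definition stage (t : R) : nat :=
  count (fun i => midpoint i < t * m%:R) (iota 0 m).

Definition at_midpoint (t : R) : bool :=
  has (fun i => t * m%:R == midpoint i) (iota 0 m).

Lemma midpoint_gt0 i : 0 < midpoint i.
Proof. by rewrite /midpoint ltr_wpDl ?invr_gt0. Qed.

Lemma ltr_midpoint i j : (midpoint i < midpoint j) = (i < j)%N.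
Proof. by rewrite /midpoint ltrD2r ltr_nat. Qed.

Lemma midpoint_lt_nat i : (i < m)%N -> midpoint i < m%:R.
Proof.
move=> im; have : i%:R + 1 <= m%:R :> R by rewrite natr1 ler_nat.
have : 2^-1 < 1 :> R by rewrite invf_lt1 ?ltr1n.
rewrite /midpoint; lra.
Qed.

Lemma stage_le t : (stage t <= m)%N.
Proof. by rewrite (leq_trans (count_size _ _)) ?size_iota. Qed.

Lemma at_midpointP t : at_midpoint t -> (stage t < m)%N /\ t * m%:R = midpoint (stage t).
Proof.
case/hasP => j; rewrite mem_iota add0n => jm /eqP tmE.
suff -> : stage t = j by [].
rewrite /stage tmE -[RHS](@count_ltn_iota0 j m (ltnW jm)).
by apply: eq_count => i; rewrite ltr_midpoint.
Qed.

Lemma stage0 : stage 0 = 0%N.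
Proof.
rewrite /stage mul0r (@eq_in_count _ _ pred0) ?count_pred0 // => i _.
by rewrite /= ltNge ltW ?midpoint_gt0.
Qed.

Lemma at_midpoint0 : at_midpoint 0 = false.
Proof.
by apply/hasP => -[i _]; rewrite mul0r => /eqP E; move: (midpoint_gt0 i); rewrite -E ltxx.
Qed.

Lemma stage1 : stage 1 = m.
Proof.
rewrite /stage mul1r (@eq_in_count _ _ predT) ?count_predT ?size_iota // => i.
by rewrite mem_iota add0n => /midpoint_lt_nat.
Qed.

Lemma at_midpoint1 : at_midpoint 1 = false.
Proof.
apply/hasP => -[i]; rewrite mem_iota add0n mul1r => /midpoint_lt_nat + /eqP E.
by rewrite -E ltxx.
Qed.

Lemma midpoint_order_locally_const t : exists2 d : R, 0 < d & forall t', `|t - t'| < d ->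
  forall i, (i < m)%N -> midpoint i != t * m%:R ->
  (midpoint i < t' * m%:R) = (midpoint i < t * m%:R) /\ t' * m%:R != midpoint i.
Proof.
have [d d_gt0 sep_d] := exists_sep_radius [seq midpoint i | i <- iota 0 m] (t * m%:R).
have m1_gt0 : 0 < m%:R + 1 :> R by rewrite ltr_wpDl.
exists (d / (m%:R + 1)) => [|t' tt' i im ist]; first by rewrite divr_gt0.
apply: ltr_stable_near; apply: lt_le_trans (sep_d _ _ ist); last by rewrite map_f ?mem_iota.
rewrite -mulrBl normrM normr_nat; move: tt'; rewrite ltr_pdivlMr // => tt'.
by apply: le_lt_trans tt'; apply: ler_wpM2l; rewrite ?lerDl.
Qed.

Lemma stage_locally_const t : ~~ at_midpoint t ->
  exists2 d : R, 0 < d & forall t', `|t - t'| < d -> ~~ at_midpoint t' /\ stage t' = stage t.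
Proof.
move=> not_mid; have [d d_gt0 near_t] := midpoint_order_locally_const t.
exists d => // t' /near_t stable.
have ist i : i \in iota 0 m -> (i < m)%N /\ midpoint i != t * m%:R.
  move=> iI; split; first by rewrite mem_iota in iI.
  by apply: contra not_mid => /eqP E; apply/hasP; exists i; rewrite // E.
split.
  by apply/hasPn => i /ist[im /(stable _ im)[_]]; rewrite eq_sym.
by apply: eq_in_count => i /ist[im /(stable _ im)[]].
Qed.

Lemma stage_near_midpoint t : at_midpoint t ->
  exists2 d : R, 0 < d & forall t', `|t - t'| < d -> t' != t ->
  ~~ at_midpoint t' /\ (stage t' = stage t \/ stage t' = (stage t).+1).
Proof.
move=> /at_midpointP[jm tmE]; set j := stage t in jm tmE *.
have [d d_gt0 near_t] := midpoint_order_locally_const t.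
exists d => // t' /near_t stable t't.
have m_gt0 : 0 < m%:R :> R by rewrite ltr0n (leq_ltn_trans _ jm).
have t'm : t' * m%:R != midpoint j.
  by rewrite -tmE; apply: contra t't => /eqP/(mulIf (lt0r_neq0 m_gt0))->.
have ist i : i != j -> midpoint i != t * m%:R.
  by move=> ij; rewrite tmE; apply: contra ij => /eqP/addIr/eqP; rewrite eqr_nat.
split.
  apply/hasPn => i; rewrite mem_iota add0n => im.
  by have [->|/ist/(stable _ im)[]] := eqVneq i j.
set c := midpoint j < t' * m%:R.
have -> : stage t' = count (fun i => (i < j)%N || ((i == j) && c)) (iota 0 m).
  apply: eq_in_count => i; rewrite mem_iota add0n => im.
  have [->|ij] := eqVneq i j; first by rewrite ltnn.
  by have [-> _] := stable _ im (ist _ ij); rewrite tmE ltr_midpoint orbF.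
case: c.
  right; rewrite -[RHS](@count_ltn_iota0 j.+1 m jm).
  by apply: eq_count => i; rewrite andbT ltnS orbC -leq_eqVlt.
left; rewrite -[RHS](@count_ltn_iota0 j m (ltnW jm)).
by apply: eq_count => i; rewrite andbF orbF.
Qed.

End Staircase.

Section ComparableMaps.
Local Open Scope classical_set_scope.
Variables (T : choiceType) (le : rel T).

Definition comparable_maps (f g : T -> T) : Prop :=
  [/\ {homo f : x y / le x y}, {homo g : x y / le x y} &
      (forall x, le (f x) (g x)) \/ (forall x, le (g x) (f x))].

Lemma comparable_maps_sym f g : comparable_maps f g -> comparable_maps g f.
Proof. by case=> f_homo g_homo [fg|gf]; split=> //; [right|left]. Qed.

Lemma zigzag_sym f g :
  clos_refl_trans _ comparable_maps f g -> clos_refl_trans _ comparable_maps g f.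
Proof.
elim=> [{}f {}g /comparable_maps_sym|{}f|f1 f2 f3 _ IH12 _ IH23].
- exact: rt_step.
- exact: rt_refl.
- exact: rt_trans IH23 IH12.
Qed.

Lemma zigzag_seq f g : clos_refl_trans _ comparable_maps f g ->
  exists m (h : nat -> T -> T), [/\ h 0 = f, h m = g &
    forall i, i < m -> comparable_maps (h i) (h i.+1)].
Proof.
move=> fg; elim: {fg}(@clos_rt_rt1n _ _ _ _ fg) => [{}f|{}f f' {}g cff' _ [m [h [h0 hm h_cmp]]]].
  by exists 0, (fun=> f).
exists m.+1, (fun i => if i is i'.+1 then h i' else f); split => //.
by case=> [_|i /h_cmp]; rewrite ?h0.
Qed.

Lemma open_homo_preimage f (U : set (finspace le)) :
  {homo f : x y / le x y} -> open U -> open (f @^-1` U : set (finspace le)).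
Proof.
move=> f_homo U_down; change (downset_open le (f @^-1` U)).
by move=> x y /= Ufx yx; apply: U_down Ufx (f_homo _ _ yx).
Qed.

End ComparableMaps.

Section ZigzagHomotopy.
Local Open Scope classical_set_scope.
Local Notation R := Rdefinitions.R.
Variables (T : choiceType) (le : rel T) (x0 : T) (m : nat) (h : nat -> T -> T).
Hypothesis le_refl : reflexive le.
Hypotheses (h0 : h 0 = id) (hm : h m = fun=> x0).
Hypothesis h_cmp : forall i, i < m -> comparable_maps le (h i) (h i.+1).

Lemma stage_map_homo i : i <= m -> {homo h i : x y / le x y}.
Proof.
case: i => [|i /h_cmp[] //]; have [->|/h_cmp[] //] := posnP m.
by rewrite h0 => x y.
Qed.

Definition upper_stage i : T -> T :=
  if pselect (forall x, le (h i x) (h i.+1 x)) then h i.+1 else h i.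

Lemma upper_stage_ge i x : i < m ->
  le (h i x) (upper_stage i x) /\ le (h i.+1 x) (upper_stage i x).
Proof.
move=> im; rewrite /upper_stage; case: pselect => [le_next|not_le].
  by rewrite le_refl le_next.
by case: (h_cmp im) => _ _ [/not_le //|ge_next]; rewrite le_refl ge_next.
Qed.

Lemma upper_stage_homo i : i < m -> {homo upper_stage i : x y / le x y}.
Proof.
by move=> im; rewrite /upper_stage; case: pselect => ?; apply: stage_map_homo => //; exact: ltnW.
Qed.

(* At a midpoint, a closed point of the time axis, the homotopy takes the larger of the two
   neighbouring stage maps: open sets are down-sets, so this is what continuity needs. *)
Definition zigzag_homotopy (xt : finspace le * R) : finspace le :=
  if at_midpoint m xt.2 then upper_stage (stage m xt.2) xt.1 else h (stage m xt.2) xt.1.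

Lemma zigzag_homotopy_continuous : continuous zigzag_homotopy.
Proof.
apply/continuousP => U U_down; rewrite openE => -[x t] /= Ux.
have [mid_t|not_mid] := boolP (at_midpoint m t).
- have [d d_gt0 near_t] := stage_near_midpoint mid_t; have [sm _] := at_midpointP mid_t.
  exists (upper_stage (stage m t) @^-1` U, ball t d); first split.
  + apply: open_nbhs_nbhs; split; first exact: open_homo_preimage (upper_stage_homo sm) U_down.
    by move: Ux; rewrite /zigzag_homotopy /= mid_t.
  + exact: nbhsx_ballx.
  move=> [y t'] /= [Uy t't]; have [->|t'_ne] := eqVneq t' t.
    by rewrite /zigzag_homotopy /= mid_t.
  have [not_mid' st'] := near_t t' t't t'_ne; have [le1 le2] := upper_stage_ge y sm.
  rewrite /zigzag_homotopy /= (negbTE not_mid').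
  by case: st' => ->; [exact: U_down Uy le1 | exact: U_down Uy le2].
- have [d d_gt0 near_t] := stage_locally_const not_mid.
  exists (h (stage m t) @^-1` U, ball t d); first split.
  + apply: open_nbhs_nbhs; split.
      exact: open_homo_preimage (stage_map_homo (stage_le _ _)) U_down.
    by move: Ux; rewrite /zigzag_homotopy /= (negbTE not_mid).
  + exact: nbhsx_ballx.
  move=> [y t'] /= [Uy /near_t[not_mid' st']].
  by rewrite /zigzag_homotopy /= (negbTE not_mid') st'.
Qed.

Lemma contractible_of_zigzag_seq : contractible (finspace le).
Proof.
exists x0, zigzag_homotopy; split; [|split].
- exact/continuous_subspaceT/zigzag_homotopy_continuous.
- by move=> x; rewrite /zigzag_homotopy /= at_midpoint0 stage0 h0.
- by move=> x; rewrite /zigzag_homotopy /= at_midpoint1 stage1 hm.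
Qed.

End ZigzagHomotopy.

Theorem contractible_of_zigzag (T : choiceType) (le : rel T) (x0 : T) : reflexive le ->
  clos_refl_trans _ (comparable_maps le) id (fun=> x0) -> contractible (finspace le).
Proof.
move=> le_refl /zigzag_seq[m [h [h0 hm h_cmp]]].
exact: contractible_of_zigzag_seq le_refl h0 hm h_cmp.
Qed.

Section OrbitSpace.
Local Open Scope group_scope.
Variables (gT : finGroupType) (G : {group gT}) (X : {set {set gT}}).
Hypothesis X_conj : forall A g, A \in X -> g \in G -> A :^ g \in X.
Local Notation chain := {set {set gT}}.
Local Notation point := (orbit_pt G X).
Local Notation zigzag := (clos_refl_trans _ (comparable_maps (@orbit_le _ G X))).

Lemma conj_chain1 (c : chain) : conj_chain c 1 = c.
Proof. by rewrite /conj_chain (eq_imset (g := id)) ?imset_id // => A; rewrite conjsg1. Qed.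

Lemma conj_chainM (c : chain) g h : conj_chain (conj_chain c g) h = conj_chain c (g * h).
Proof. by rewrite /conj_chain -imset_comp; apply: eq_imset => A /=; rewrite conjsgM. Qed.

Lemma conj_chainS (c d : chain) g : c \subset d -> conj_chain c g \subset conj_chain d g.
Proof. exact: imsetS. Qed.

Lemma chainsP (c : chain) : reflect
  [/\ c != set0, c \subset X & {in c &, forall A B : {set gT}, (A \subset B) || (B \subset A)}]
  (c \in chains X).
Proof.
rewrite inE; apply: (iffP and3P) => [[c0 cX /forall_inP cc]|[c0 cX cc]]; split=> //.
  by move=> A B Ac Bc; move/forall_inP: (cc A Ac); apply.
by apply/forall_inP => A Ac; apply/forall_inP => B Bc; apply: cc.
Qed.

Lemma chains_conj c g : c \in chains X -> g \in G -> conj_chain c g \in chains X.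
Proof.
case/chainsP => c0 cX cc gG; apply/chainsP; split.
- by rewrite imset_eq0.
- by apply/subsetP => _ /imsetP[A Ac ->]; rewrite X_conj ?(subsetP cX).
- by move=> _ _ /imsetP[A Ac ->] /imsetP[B Bc ->]; rewrite !conjSg cc.
Qed.

Lemma chain_orbitJ c g : g \in G -> chain_orbit G (conj_chain c g) = chain_orbit G c.
Proof.
move=> gG; apply/setP => d; apply/imsetP/imsetP => -[h hG ->].
  by exists (g * h); rewrite ?groupM // conj_chainM.
by exists (g^-1 * h); rewrite ?groupM ?groupV // conj_chainM mulKVg.
Qed.

Lemma mem_chain_orbit c : c \in chain_orbit G c.
Proof. by apply/imsetP; exists 1; rewrite ?conj_chain1. Qed.

Definition orbit_repr (O : point) : chain :=
  odflt set0 [pick c in chains X | chain_orbit G c == val O].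

Lemma orbit_reprP (O : point) :
  orbit_repr O \in chains X /\ chain_orbit G (orbit_repr O) = val O.
Proof.
rewrite /orbit_repr; case: pickP => [c /andP[cX /eqP //]|no_repr].
by case/imsetP: (valP O) => c cX cO; move: (no_repr c); rewrite cX cO eqxx.
Qed.

Lemma orbit_le_refl : reflexive (@orbit_le _ G X).
Proof.
move=> O; have [_ EO] := orbit_reprP O.
have rO : orbit_repr O \in val O by rewrite -EO mem_chain_orbit.
by apply/exists_inP; exists (orbit_repr O) => //; apply/exists_inP; exists (orbit_repr O).
Qed.

Lemma orbit_leP (O D : point) : orbit_le O D ->
  exists2 x, x \in G & conj_chain (orbit_repr O) x \subset orbit_repr D.
Proof.
case/exists_inP => c cO /exists_inP[d dD cd].
have [_ EO] := orbit_reprP O; have [_ ED] := orbit_reprP D.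
rewrite -EO in cO; rewrite -ED in dD.
case/imsetP: cO cd => g gG ->; case/imsetP: dD => h hG -> cd.
exists (g * h^-1); first by rewrite groupM ?groupV.
rewrite -conj_chainM -[orbit_repr D]conj_chain1 -(mulgV h) -conj_chainM.
exact: conj_chainS.
Qed.

Definition equivariant_chain_map (Phi : chain -> chain) :=
  [/\ {in chains X, forall c : chain, Phi c \in chains X},
      {in chains X &, forall c d : chain, c \subset d -> Phi c \subset Phi d} &
      forall c g, c \in chains X -> g \in G -> Phi (conj_chain c g) = conj_chain (Phi c) g].

Definition orbit_map (Phi : chain -> chain) (O : point) : point :=
  insubd O (chain_orbit G (Phi (orbit_repr O))).

Lemma orbit_mapE Phi O : equivariant_chain_map Phi ->
  val (orbit_map Phi O) = chain_orbit G (Phi (orbit_repr O)).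
Proof.
case=> Phi_chains _ _; rewrite val_insubd; have [cX _] := orbit_reprP O.
by rewrite imset_f // Phi_chains.
Qed.

Lemma orbit_map_homo Phi : equivariant_chain_map Phi ->
  {homo orbit_map Phi : O D / orbit_le O D}.
Proof.
move=> Phi_eq O D /orbit_leP[x xG sub]; have [Phi_chains Phi_homo PhiJ] := Phi_eq.
have [cO _] := orbit_reprP O; have [cD _] := orbit_reprP D.
apply/exists_inP; exists (conj_chain (Phi (orbit_repr O)) x).
  by rewrite orbit_mapE //; apply/imsetP; exists x.
apply/exists_inP; exists (Phi (orbit_repr D)); first by rewrite orbit_mapE ?mem_chain_orbit.
by rewrite -PhiJ // Phi_homo ?chains_conj.
Qed.

Lemma comparable_orbit_maps Phi Psi :
  equivariant_chain_map Phi -> equivariant_chain_map Psi ->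
  {in chains X, forall c : chain, Phi c \subset Psi c} ->
  comparable_maps (@orbit_le _ G X) (orbit_map Phi) (orbit_map Psi).
Proof.
move=> Phi_eq Psi_eq PhiPsi; split; try exact: orbit_map_homo.
left=> O; have [cO _] := orbit_reprP O.
apply/exists_inP; exists (Phi (orbit_repr O)); first by rewrite orbit_mapE ?mem_chain_orbit.
apply/exists_inP; exists (Psi (orbit_repr O)); first by rewrite orbit_mapE ?mem_chain_orbit.
exact: PhiPsi.
Qed.

Lemma eq_in_orbit_map Phi Psi : {in chains X, Phi =1 Psi} -> orbit_map Phi = orbit_map Psi.
Proof.
by move=> PhiPsi; apply: boolp.funext => O; rewrite /orbit_map PhiPsi //; case: (orbit_reprP O).
Qed.

Lemma orbit_map_id : orbit_map id = id.
Proof.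
apply: boolp.funext => O; apply: val_inj; rewrite val_insubd.
by have [_ ->] := orbit_reprP O; rewrite (valP O).
Qed.

Definition equivariant_homo (f : {set gT} -> {set gT}) :=
  [/\ {in X, forall A : {set gT}, f A \in X},
      {in X &, forall A B : {set gT}, A \subset B -> f A \subset f B} &
      forall A g, A \in X -> g \in G -> f (A :^ g) = f A :^ g].

Lemma const_equivariant N : N \in X ->
  (forall g, g \in G -> N :^ g = N) -> equivariant_homo (fun=> N).
Proof. by move=> NX NJ; split=> // A g _ gG; rewrite NJ. Qed.

Section Splice.
Variables (lo hi : {set gT} -> {set gT}).
Hypotheses (lo_eq : equivariant_homo lo) (hi_eq : equivariant_homo hi).
Hypothesis lo_le_hi : {in X, forall A : {set gT}, lo A \subset hi A}.

(* For [b <= a <= b.+1] this is again a chain: if [B \subset A], [#|A| < a] and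
   [b <= #|B|], then [A = B]. *)
Definition splice (a b : nat) (c : chain) : chain :=
  lo @: [set A in c | #|A| < a] :|: hi @: [set A in c | b <= #|A|].

Variables (a b : nat).
Hypothesis ab : b <= a <= b.+1.

Lemma splice_compat A B : A \in X -> B \in X -> (A \subset B) || (B \subset A) ->
  #|A| < a -> b <= #|B| -> lo A \subset hi B.
Proof.
have [loX lo_homo _] := lo_eq; move=> AX BX /orP[AB|BA] Aa bB.
  exact: subset_trans (lo_homo _ _ AX BX AB) (lo_le_hi BX).
suff -> : A = B by rewrite lo_le_hi.
apply/eqP; rewrite eq_sym eqEcard BA (leq_trans _ bB) //.
by case/andP: ab => _ ab1; rewrite -ltnS (leq_trans Aa ab1).
Qed.

Lemma splice_chains c : c \in chains X -> splice a b c \in chains X.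
Proof.
have [loX lo_homo _] := lo_eq; have [hiX hi_homo _] := hi_eq.
case/chainsP => /set0Pn[A0 A0c] cX cc; have c_X A : A \in c -> A \in X by apply: (subsetP cX).
apply/chainsP; split.
- apply/set0Pn; have [A0a|aA0] := ltnP #|A0| a.
    by exists (lo A0); rewrite inE imset_f ?inE ?A0c.
  exists (hi A0); rewrite inE orbC imset_f ?inE ?A0c //.
  by case/andP: ab => ba _; apply: leq_trans ba aA0.
- by apply/subsetP => _ /setUP[] /imsetP[A /setIdP[Ac _] ->]; rewrite ?loX ?hiX ?c_X.
- move=> _ _ /setUP[] /imsetP[A /setIdP[Ac PA] ->] /setUP[] /imsetP[B /setIdP[Bc PB] ->].
  + by case/orP: (cc A B Ac Bc) => ?; [rewrite lo_homo ?c_X | rewrite orbC lo_homo ?c_X].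
  + by rewrite splice_compat ?c_X ?cc.
  + by rewrite orbC splice_compat ?c_X ?cc.
  + by case/orP: (cc A B Ac Bc) => ?; [rewrite hi_homo ?c_X | rewrite orbC hi_homo ?c_X].
Qed.

Lemma spliceJ c g : c \in chains X -> g \in G ->
  splice a b (conj_chain c g) = conj_chain (splice a b c) g.
Proof.
have [_ _ loJ] := lo_eq; have [_ _ hiJ] := hi_eq.
case/chainsP => _ cX _ gG; have c_X A : A \in c -> A \in X by apply: (subsetP cX).
have conj_part (f : {set gT} -> {set gT}) (P : pred nat) :
    (forall A, A \in X -> f (A :^ g) = f A :^ g) ->
    f @: [set A in conj_chain c g | P #|A|] = conj_chain (f @: [set A in c | P #|A|]) g.
  move=> fJ; rewrite /conj_chain -!imset_comp; apply/setP => u.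
  apply/imsetP/imsetP => -[A].
    case/setIdP => /imsetP[B Bc ->]; rewrite cardJg => PB ->.
    by exists B; rewrite ?inE ?Bc //= fJ ?c_X.
  case/setIdP => Ac PA ->; exists (A :^ g); last by rewrite /= fJ ?c_X.
  by apply/setIdP; split; [exact: imset_f | rewrite cardJg].
have loJg A : A \in X -> lo (A :^ g) = lo A :^ g by move=> AX; apply: loJ.
have hiJg A : A \in X -> hi (A :^ g) = hi A :^ g by move=> AX; apply: hiJ.
rewrite /splice /conj_chain imsetU -!/(conj_chain _ g).
by rewrite (conj_part lo (fun k => k < a)) // (conj_part hi (fun k => b <= k)).
Qed.

Lemma splice_chain_map : equivariant_chain_map (splice a b).
Proof.
split; [exact: splice_chains | | exact: spliceJ].
move=> c d _ _ cd; apply: setUSS; apply: imsetS; apply/subsetP => A;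
  by rewrite !inE => /andP[/(subsetP cd) -> ->].
Qed.

End Splice.

Lemma image_zigzag lo hi : equivariant_homo lo -> equivariant_homo hi ->
  {in X, forall A : {set gT}, lo A \subset hi A} ->
  zigzag (orbit_map (fun c => lo @: c)) (orbit_map (fun c => hi @: c)).
Proof.
move=> lo_eq hi_eq lo_le_hi.
pose map a b := orbit_map (splice lo hi a b).
have eq_nn n : equivariant_chain_map (splice lo hi n n).
  by apply: splice_chain_map; rewrite ?leqnn ?leqnSn.
have eq_Sn n : equivariant_chain_map (splice lo hi n.+1 n).
  by apply: splice_chain_map; rewrite ?leqnn ?leqnSn.
have spliceS a a' b b' c : a <= a' -> b' <= b -> splice lo hi a b c \subset splice lo hi a' b' c.
  move=> aa' b'b; apply: setUSS; apply: imsetS; apply/subsetP => A; rewrite !inE => /andP[-> /=].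
    by move/leq_trans; apply.
  exact: leq_trans.
have step n : zigzag (map n.+1 n.+1) (map n n).
  apply: rt_trans (rt_step _ _ _ _ (comparable_orbit_maps (eq_nn _) (eq_Sn n) _)) _.
    by move=> c _; apply: spliceS.
  apply/rt_step/comparable_maps_sym/comparable_orbit_maps => // c _.
  exact: spliceS.
have to0 n : zigzag (map n n) (map 0 0).
  by elim: n => [|n IH]; [exact: rt_refl | exact: rt_trans (step n) IH].
have -> : orbit_map (fun c => lo @: c) = map #|gT|.+1 #|gT|.+1.
  apply: eq_in_orbit_map => c _; rewrite /splice.
  have -> : [set A in c | #|A| < #|gT|.+1] = c.
    by apply/setP => A; rewrite inE ltnS max_card andbT.
  have -> : [set A in c | #|gT|.+1 <= #|A|] = set0.
    by apply/setP => A; rewrite !inE ltnNge max_card andbF.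
  by rewrite imset0 setU0.
have -> : orbit_map (fun c => hi @: c) = map 0 0.
  apply: eq_in_orbit_map => c _; rewrite /splice.
  have -> : [set A in c | #|A| < 0] = set0 by apply/setP => A; rewrite !inE andbF.
  have -> : [set A in c | 0 <= #|A|] = c by apply/setP => A; rewrite inE andbT.
  by rewrite imset0 set0U.
exact: to0.
Qed.

Lemma image_orbit_map_const f N (NX : [set N] \in chains X) :
  {in X, forall A : {set gT}, exists2 g, g \in G & f A = N :^ g} ->
  {in X &, forall A B : {set gT}, A \subset B -> f A = f B} ->
  orbit_map (fun c => f @: c) = fun=> Sub (chain_orbit G [set N]) (imset_f _ NX).
Proof.
move=> fN f_const; apply: boolp.funext => O; apply: val_inj; rewrite /= val_insubd.
have [/chainsP[/set0Pn[A0 A0c] cX cc] _] := orbit_reprP O.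
have c_X A : A \in orbit_repr O -> A \in X by apply: (subsetP cX).
have [g gG fA0] := fN A0 (c_X _ A0c).
have -> : f @: orbit_repr O = conj_chain [set N] g.
  rewrite /conj_chain imset_set1 -fA0; apply/setP => u; rewrite inE.
  apply/imsetP/eqP => [[B Bc ->]|->]; last by exists A0.
  by case/orP: (cc A0 B A0c Bc) => ?; [rewrite (f_const A0 B) ?c_X | rewrite (f_const B A0) ?c_X].
by rewrite chain_orbitJ // imset_f.
Qed.

Theorem orbit_space_contractible (f1 f2 f3 f4 : {set gT} -> {set gT}) (N : {set gT}) :
  N \in X -> equivariant_homo f1 -> equivariant_homo f2 -> equivariant_homo f3 ->
  equivariant_homo f4 ->
  {in X, forall A : {set gT},
    [/\ A \subset f1 A, f2 A \subset f1 A, f2 A \subset f3 A & f4 A \subset f3 A]} ->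
  {in X, forall A : {set gT}, exists2 g, g \in G & f4 A = N :^ g} ->
  {in X &, forall A B : {set gT}, A \subset B -> f4 A = f4 B} ->
  contractible (orbit_space G X).
Proof.
move=> NX f1_eq f2_eq f3_eq f4_eq sub f4N f4_const.
have NchX : [set N] \in chains X.
  apply/chainsP; split; first by apply/set0Pn; exists N; rewrite inE.
    by rewrite sub1set.
  by move=> A B /set1P-> /set1P->; rewrite subxx.
apply: (@contractible_of_zigzag _ _ (Sub (chain_orbit G [set N]) (imset_f _ NchX) : point)).
  exact: orbit_le_refl.
rewrite -(image_orbit_map_const NchX f4N f4_const) -orbit_map_id.
have -> : orbit_map id = orbit_map (fun c => id @: c).
  by apply: eq_in_orbit_map => c _; rewrite imset_id.
have id_eq : equivariant_homo id by split.
apply: rt_trans (image_zigzag id_eq f1_eq _) _; first by move=> A /sub[].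
apply: rt_trans (zigzag_sym (image_zigzag f2_eq f1_eq _)) _; first by move=> A /sub[].
apply: rt_trans (image_zigzag f2_eq f3_eq _) _; first by move=> A /sub[].
by apply: zigzag_sym (image_zigzag f4_eq f3_eq _) => A /sub[].
Qed.

End OrbitSpace.

Section PSubgroupPosets.
Local Open Scope group_scope.
Variables (gT : finGroupType) (G : {group gT}) (p : nat).

Lemma SpP (A : {set gT}) : reflect
  (exists H : {group gT}, [/\ A = H, H \subset G, p.-group H & H != 1 :> {set gT}])
  (A \in Sp p G).
Proof.
rewrite inE; apply: (iffP and4P) => [[gA sAG pA ntA]|[H [-> sHG pH ntH]]].
  by exists (Group gA).
by split=> //; apply: groupP.
Qed.

Lemma mem_Sp (H : {group gT}) :
  H \subset G -> p.-group H -> H != 1 :> {set gT} -> gval H \in Sp p G.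
Proof. by move=> *; apply/SpP; exists H. Qed.

Lemma in_Ap (A : {set gT}) : (A \in Ap p G) = (A \in Sp p G) && p.-abelem A.
Proof. by rewrite inE. Qed.

Lemma in_Bp (A : {set gT}) : (A \in Bp p G) = (A \in Sp p G) && (A == 'O_p('N_G(A))).
Proof. by rewrite inE. Qed.

Lemma mem_Ap (H : {group gT}) :
  H \subset G -> H != 1 :> {set gT} -> p.-abelem H -> gval H \in Ap p G.
Proof. by move=> sHG ntH aH; rewrite in_Ap aH mem_Sp ?(abelem_pgroup aH). Qed.

Lemma ApP (A : {set gT}) : A \in Ap p G ->
  exists H : {group gT}, [/\ A = H, H \subset G, H != 1 :> {set gT} & p.-abelem H].
Proof. by rewrite in_Ap => /andP[/SpP[H [-> sHG _ ntH]] aH]; exists H. Qed.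

Lemma memJ_Sp (A : {set gT}) g : A \in Sp p G -> g \in G -> A :^ g \in Sp p G.
Proof.
case/SpP => H [-> sHG pH ntH] gG; apply/SpP; exists (H :^ g)%G; split=> //.
- by rewrite -(conjGid gG) conjSg.
- by rewrite pgroupJ.
- by rewrite conjsg_eq1.
Qed.

Lemma memJ_Ap (A : {set gT}) g : A \in Ap p G -> g \in G -> A :^ g \in Ap p G.
Proof.
rewrite !in_Ap => /andP[SpA aA] gG; rewrite memJ_Sp //=.
by case/SpP: SpA aA => H [-> _ _ _]; rewrite abelemJ.
Qed.

Lemma memJ_Bp (A : {set gT}) g : A \in Bp p G -> g \in G -> A :^ g \in Bp p G.
Proof.
rewrite !in_Bp => /andP[SpA /eqP AE] gG; rewrite memJ_Sp //=.
case/SpP: SpA AE => H [-> _ _ _] AE.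
have -> : 'N_G(H :^ g) = 'N_G(H) :^ g by rewrite normJ conjIg conjGid.
by rewrite pcoreJ -AE.
Qed.

End PSubgroupPosets.

Section PQGroups.
Local Open Scope group_scope.
Variables (p q : nat).
Hypotheses (p_pr : prime p) (q_pr : prime q).

Lemma Sylow_meet_conj_cent (gT : finGroupType) (K P M : {group gT}) m :
  M <| K -> P \subset K -> P :&: M = 1 -> m \in M -> P :&: P :^ m \subset 'C[m].
Proof.
case/andP=> sMK nMK sPK tiPM mM; apply/subsetP => y /setIP[yP].
rewrite mem_conjg => zP; set z := y ^ m^-1 in zP.
have yE : y = z ^ m by rewrite conjgKV.
have : [~ z, m] \in P :&: M.
  rewrite inE {1}commgEl -yE groupM ?groupV //=.
  by rewrite commgEr groupM // memJ_norm ?groupV // (subsetP nMK) ?(subsetP sPK).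
rewrite tiPM inE => zm1.
have -> : y = z by rewrite yE; apply/conjg_fixP.
exact/cent1P/commgP.
Qed.

Lemma Sylow_meet_normal_prime (gT : finGroupType) (K P1 P2 M : {group gT}) :
  p.-Sylow(K) P1 -> p.-Sylow(K) P2 -> M <| K -> prime #|M| -> K :=: P1 * M ->
  P1 :&: M = 1 -> 'O_p(K) = 1 -> P1 :&: P2 = 1 \/ P1 :=: P2.
Proof.
move=> sylP1 sylP2 nsMK M_pr KE tiP1M Op1.
have [sMK nMK] := andP nsMK; have sP1K := pHall_sub sylP1.
(* [P2] is a conjugate of [P1] by an element of [M], and [P1 :&: P2] centralizes [M]. *)
have [x xK P2E] := Sylow_trans sylP1 sylP2; rewrite KE in xK.
case/mulsgP: xK P2E => u m uP1 mM -> P2E.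
rewrite conjsgM (conjGid uP1) in P2E; rewrite P2E.
have [->|ntm] := eqVneq m 1; first by right; rewrite conjsg1.
have om : #[m] = #|M| by apply/(prime_nt_dvdP M_pr); rewrite ?order_eq1 ?order_dvdG.
have ME : M :=: <[m]>.
  by apply/eqP; rewrite eq_sym eqEcard cycle_subG mM -orderE om leqnn.
have nsCK : 'C_P1(M) <| K.
  rewrite /normal subIset ?sP1K //= KE mul_subG //.
    by rewrite normsI ?normG // norms_cent // (subset_trans sP1K nMK).
  by rewrite cents_norm // centsC subsetIr.
left; apply/trivgP; rewrite -Op1.
apply: subset_trans (pcore_max (pgroupS (subsetIl _ _) (pHall_pgroup sylP1)) nsCK).
by rewrite subsetI subsetIl /= ME cent_cycle (Sylow_meet_conj_cent nsMK sP1K tiP1M mM).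
Qed.

Section PQOrder.
Variables (gT : finGroupType) (K : {group gT}) (a : nat).
Hypothesis oK : #|K| %| p ^ a * q.

Lemma pq_prime_dvd r : prime r -> r %| #|K| -> r = p \/ r = q.
Proof.
move=> r_pr /dvdn_trans/(_ oK); rewrite Euclid_dvdM // Euclid_dvdX // !dvdn_prime2 //.
by case/orP => [/andP[/eqP-> _]|/eqP->]; [left|right].
Qed.

Lemma pq_solvable : solvable K.
Proof.
apply: Burnside_p_a_q_b; rewrite -[2]/(size [:: p; q]).
apply: uniq_leq_size (primes_uniq _) _ => r; rewrite mem_primes => /and3P[r_pr _ rK].
by case: (pq_prime_dvd r_pr rK) => ->; rewrite !inE eqxx ?orbT.
Qed.

Lemma pq_minnormal : 'O_p(K) = 1 -> K != 1 :> {set gT} ->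
  q != p /\ exists2 M : {group gT}, M <| K & #|M| = q.
Proof.
move=> Op1 ntK; have [M minM sMK] := minnormal_exists ntK (normG K).
have [nMK ntM abM] := minnormal_solvable minM sMK pq_solvable.
have nsMK : M <| K by rewrite /normal sMK.
have r_pr : prime (pdiv #|M|) by rewrite pdiv_prime // cardG_gt1.
have rM := abelem_pgroup abM.
have r_ne_p : pdiv #|M| != p.
  by apply: contraNneq ntM => rp; rewrite -subG1 -Op1 pcore_max // -rp.
have rq : pdiv #|M| = q.
  case: (pq_prime_dvd r_pr (dvdn_trans (pdiv_dvd _) (cardSg sMK))) => // rp.
  by rewrite rp eqxx in r_ne_p.
split; first by rewrite -rq.
exists M => //; apply/(prime_nt_dvdP q_pr); first by rewrite -trivg_card1.
have cMp : coprime #|M| (p ^ a).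
  by rewrite (card_pgroup rM) rq coprimeXl // coprimeXr // prime_coprime // dvdn_prime2 // -rq.
by rewrite -(Gauss_dvdr _ cMp) (dvdn_trans (cardSg sMK) oK).
Qed.

Lemma pq_Sylow_mulg (P M : {group gT}) : p.-Sylow(K) P -> M <| K -> #|M| = q -> q != p ->
  K :=: P * M /\ P :&: M = 1.
Proof.
move=> sylP nsMK oM qp; have sPK := pHall_sub sylP; have pP := pHall_pgroup sylP.
have tiPM : P :&: M = 1.
  by apply: coprime_TIg; rewrite oM (pnat_coprime pP) // p'natE // dvdn_prime2 // eq_sym.
split=> //; apply/eqP; rewrite eq_sym eqEcard mul_subG ?(normal_sub nsMK) //= TI_cardMg // oM.
rewrite -(Lagrange sPK) leq_mul2l; apply/orP; right; apply: dvdn_leq (prime_gt0 q_pr) _.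
have /and3P[_ _ p'iKP] := sylP.
have cop : coprime #|K : P| (p ^ a) by rewrite coprimeXr // (p'nat_coprime p'iKP) ?pnat_id.
by rewrite -(Gauss_dvdr _ cop) (dvdn_trans (dvdn_indexg K P) oK).
Qed.

End PQOrder.

Lemma pq_Sylow_TI (gT : finGroupType) (G P1 P2 : {group gT}) (a : nat) :
  #|G| = (p ^ a * q)%N -> p.-Sylow(G) P1 -> p.-Sylow(G) P2 ->
  P1 :&: P2 \subset 'O_p(G) \/ P1 :=: P2.
Proof.
move=> oG sylP1 sylP2; set D := 'O_p(G).
have nsDG : D <| G := pcore_normal p G.
have nsDP1 : D <| P1 := normalS (pcore_sub_Hall sylP1) (pHall_sub sylP1) nsDG.
have nsDP2 : D <| P2 := normalS (pcore_sub_Hall sylP2) (pHall_sub sylP2) nsDG.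
have sylP1b := quotient_pHall (normal_norm nsDP1) sylP1.
have sylP2b := quotient_pHall (normal_norm nsDP2) sylP2.
have oGb : #|G / D| %| p ^ a * q by rewrite -oG dvdn_quotient.
have [Gb1|ntGb] := eqVneq (G / D) 1.
  right; have sGD : G \subset D by rewrite -(quotient_sub1 (normal_norm nsDG)) Gb1.
  have sub_Sylow (Q Q' : {group gT}) : p.-Sylow(G) Q -> p.-Sylow(G) Q' -> Q \subset Q'.
    move=> sylQ sylQ'.
    by rewrite (subset_trans (pHall_sub sylQ)) ?(subset_trans sGD) ?pcore_sub_Hall.
  by apply/eqP; rewrite eqEsubset !sub_Sylow.
have Op1 := trivg_pcore_quotient p G.
have [qp [M nsM oM]] := pq_minnormal oGb Op1 ntGb.
have [GbE tiP1M] := pq_Sylow_mulg oGb sylP1b nsM oM qp.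
have M_pr : prime #|M| by rewrite oM.
have [tib|eqb] := Sylow_meet_normal_prime sylP1b sylP2b nsM M_pr GbE tiP1M Op1.
  left; rewrite -quotient_sub1; last by rewrite subIset ?(normal_norm nsDP1).
  by apply: subset_trans (quotientI _ _ _) _; rewrite tib.
by right; rewrite (quotient_inj nsDP1 nsDP2 eqb).
Qed.

End PQGroups.

Section SylowOver.
Local Open Scope group_scope.
Variables (gT : finGroupType) (G : {group gT}) (p q a : nat).
Hypotheses (p_pr : prime p) (q_pr : prime q) (oG : #|G| = (p ^ a * q)%N).
Local Notation D := 'O_p(G).

Lemma pcoreJG g : g \in G -> D :^ g = D.
Proof. by move=> gG; apply/normP; rewrite (subsetP (normal_norm (pcore_normal p G))). Qed.

Lemma sub_pcoreJG (A : {set gT}) g : g \in G -> (A :^ g \subset D) = (A \subset D).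
Proof. by move=> gG; rewrite -{1}(pcoreJG gG) conjSg. Qed.

(* A Sylow p-subgroup over [A] (junk value [1] if there is none); it is unique when [A] is a
   p-subgroup not contained in [O_p(G)], by [pq_Sylow_TI]. *)
Definition syl_over (A : {set gT}) : {group gT} :=
  odflt 1%G [pick P : {group gT} | p.-Sylow(G) P && (A \subset P)].

Lemma syl_overP (H : {group gT}) : H \subset G -> p.-group H ->
  p.-Sylow(G) (syl_over H) /\ H \subset syl_over H.
Proof.
move=> sHG pH; rewrite /syl_over; case: pickP => [P /andP[] //|no_syl].
by have [P sylP sHP] := Sylow_superset sHG pH; move: (no_syl P); rewrite sylP sHP.
Qed.

Lemma syl_over_uniq (H P : {group gT}) : ~~ (H \subset D) -> H \subset G -> p.-group H ->
  p.-Sylow(G) P -> H \subset P -> P :=: syl_over H.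
Proof.
move=> nHD sHG pH sylP sHP; have [sylQ sHQ] := syl_overP sHG pH.
case: (pq_Sylow_TI p_pr q_pr oG sylP sylQ) => // sPQD.
by case/negP: nHD; apply: subset_trans sPQD; rewrite subsetI sHP.
Qed.

Lemma syl_overJ (H : {group gT}) g : ~~ (H \subset D) -> H \subset G -> p.-group H ->
  g \in G -> syl_over (H :^ g) = (syl_over H :^ g)%G.
Proof.
move=> nHD sHG pH gG; have [sylQ sHQ] := syl_overP sHG pH.
apply/val_inj/esym; apply: (@syl_over_uniq (H :^ g)%G).
- by rewrite sub_pcoreJG.
- by rewrite -(conjGid gG) conjSg.
- by rewrite pgroupJ.
- by rewrite pHallJ.
- by rewrite conjSg.
Qed.

Lemma syl_overS (H K : {group gT}) : ~~ (H \subset D) -> H \subset K -> K \subset G ->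
  p.-group K -> syl_over H = syl_over K.
Proof.
move=> nHD sHK sKG pK; have [sylQ sKQ] := syl_overP sKG pK.
apply/val_inj/esym.
exact: syl_over_uniq nHD (subset_trans sHK sKG) (pgroupS sHK pK) sylQ (subset_trans sHK sKQ).
Qed.

End SylowOver.

Section TrivialCore.
Local Open Scope group_scope.
Variables (gT : finGroupType) (G : {group gT}) (p q a : nat).
Hypotheses (p_pr : prime p) (q_pr : prime q) (oG : #|G| = (p ^ a * q)%N).
Hypothesis D1 : 'O_p(G) = 1.
Variables (X : {set {set gT}}) (F : {group gT} -> {group gT}).
Hypothesis X_conj : forall A g, A \in X -> g \in G -> A :^ g \in X.
Hypothesis X_Sp : {subset X <= Sp p G}.
Hypothesis F_Sylow : forall P : {group gT}, p.-Sylow(G) P -> gval (F P) \in X.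
Hypothesis FJ : forall (P : {group gT}) g, F (P :^ g)%G :=: F P :^ g.
Hypothesis mulF_X : {in X, forall A : {set gT}, A * F (syl_over G p A) \in X}.

Local Notation Fs A := (gval (F (syl_over G p A))).

Lemma memX_group A : A \in X ->
  exists H : {group gT}, [/\ A = H, H \subset G, p.-group H & ~~ (H \subset 'O_p(G))].
Proof. by move/X_Sp/SpP => [H [-> sHG pH ntH]]; exists H; rewrite D1 subG1. Qed.

Lemma Fs_sub_eq : {in X &, forall A B : {set gT}, A \subset B -> Fs A = Fs B}.
Proof.
move=> _ _ /memX_group[H [-> _ _ nHD]] /memX_group[K [-> sKG pK _]] sHK.
by rewrite (syl_overS p_pr q_pr oG nHD sHK sKG pK).
Qed.

Lemma FsJ A g : A \in X -> g \in G -> Fs (A :^ g) = Fs A :^ g.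
Proof.
by case/memX_group => H [-> sHG pH nHD] gG; rewrite (syl_overJ p_pr q_pr oG nHD sHG pH gG) FJ.
Qed.

Lemma Fs_equivariant : equivariant_homo G X (fun A => Fs A).
Proof.
split; [|by move=> A B AX BX /(Fs_sub_eq AX BX)->|exact: FsJ].
by move=> _ /memX_group[H [-> sHG pH _]]; apply: F_Sylow (syl_overP sHG pH).1.
Qed.

Lemma mulFs_equivariant : equivariant_homo G X (fun A => A * Fs A).
Proof.
split; [exact: mulF_X | |by move=> A g AX gG; rewrite conjsMg FsJ].
by move=> A B AX BX sAB; rewrite (Fs_sub_eq AX BX sAB) mulSg.
Qed.

Theorem trivial_core_contractible : contractible (orbit_space G X).
Proof.
have [P0 sylP0] := Sylow_exists p G; have Fs_eq := Fs_equivariant.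
apply: (orbit_space_contractible X_conj (F_Sylow sylP0) mulFs_equivariant Fs_eq Fs_eq Fs_eq).
- move=> _ /memX_group[H [-> _ _ _]].
  by rewrite subxx mulg_subl ?mulg_subr ?group1.
- move=> _ /memX_group[H [-> sHG pH _]]; have [sylQ _] := syl_overP sHG pH.
  have [x xG QE] := Sylow_trans sylP0 sylQ; exists x => //.
  by have -> : syl_over G p H = (P0 :^ x)%G by apply: val_inj.
- exact: Fs_sub_eq.
Qed.

End TrivialCore.

Section ElementaryAbelian.
Local Open Scope group_scope.
Variables (gT : finGroupType) (G : {group gT}) (p : nat).

Lemma centerJ (A : {set gT}) g : 'Z(A :^ g) = 'Z(A) :^ g.
Proof. by rewrite /center centJ conjIg. Qed.

Lemma Ohm1_center_pgroup (P : {group gT}) : p.-group P ->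
  [/\ 'Ohm_1('Z(P)) \subset P, p.-abelem 'Ohm_1('Z(P)), P \subset 'C('Ohm_1('Z(P))) &
      P != 1 :> {set gT} -> 'Ohm_1('Z(P)) != 1 :> {set gT}].
Proof.
move=> pP; split.
- exact: subset_trans (Ohm_sub 1 _) (center_sub P).
- exact: Ohm1_abelem (pgroupS (center_sub P) pP) (center_abelian P).
- by rewrite centsC (subset_trans (Ohm_sub 1 _)) // /center subsetIr.
- by rewrite Ohm1_eq1 center_nil_eq1 // (pgroup_nil pP).
Qed.

Lemma mem_Ap_mulg (H K : {group gT}) : H \subset G -> K \subset G -> H != 1 :> {set gT} ->
  H \subset 'C(K) -> p.-abelem H -> p.-abelem K -> H * K \in Ap p G.
Proof.
move=> sHG sKG ntH cHK aH aK; rewrite -(cent_joinEl cHK) -[H <*> K]/(gval (H <*> K)%G).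
apply: mem_Ap.
- by rewrite join_subG sHG.
- by apply: contra ntH => /eqP HK1; rewrite -subG1 -HK1 joing_subl.
- by rewrite (cprod_abelem p (cprodEY _)) ?aH // centsC.
Qed.

Lemma mul_Ohm1Z_syl_over_Ap (A : {set gT}) : A \in Ap p G ->
  A * 'Ohm_1('Z(syl_over G p A)) \in Ap p G.
Proof.
case/ApP=> H [-> sHG ntH aH]; have [sylQ sHQ] := syl_overP sHG (abelem_pgroup aH).
have [sZQ aZ cQZ _] := Ohm1_center_pgroup (pHall_pgroup sylQ).
apply: mem_Ap_mulg => //; first exact: subset_trans sZQ (pHall_sub sylQ).
exact: subset_trans sHQ cQZ.
Qed.

End ElementaryAbelian.

Section SylowMembership.
Local Open Scope group_scope.
Variables (gT : finGroupType) (G : {group gT}) (p : nat).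
Hypotheses (p_pr : prime p) (pG : p %| #|G|).

Lemma Sylow_neq1 (P : {group gT}) : p.-Sylow(G) P -> P != 1 :> {set gT}.
Proof.
by move=> sylP; rewrite -cardG_gt1 (card_Hall sylP) p_part_gt1 mem_primes p_pr pG cardG_gt0.
Qed.

Lemma Sylow_mem_Sp (P : {group gT}) : p.-Sylow(G) P -> gval P \in Sp p G.
Proof. by move=> sylP; rewrite mem_Sp ?(pHall_sub sylP) ?(pHall_pgroup sylP) ?Sylow_neq1. Qed.

Lemma pcore_norm_Sylow (P : {group gT}) : p.-Sylow(G) P -> 'O_p('N_G(P)) = P.
Proof.
move=> sylP; have nsPN := normalSG (pHall_sub sylP).
apply/eqP; rewrite eqEsubset pcore_max ?(pHall_pgroup sylP) // andbT.
by apply/pcore_sub_Hall/(pHall_subl (normal_sub nsPN) (subsetIl _ _) sylP).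
Qed.

Lemma Sylow_mem_Bp (P : {group gT}) : p.-Sylow(G) P -> gval P \in Bp p G.
Proof. by move=> sylP; rewrite in_Bp Sylow_mem_Sp ?pcore_norm_Sylow ?eqxx. Qed.

Lemma Ohm1_center_Sylow_mem_Ap (P : {group gT}) : p.-Sylow(G) P ->
  gval 'Ohm_1('Z(P))%G \in Ap p G.
Proof.
move=> sylP; have [sZP aZ _ ntZ] := Ohm1_center_pgroup (pHall_pgroup sylP).
by rewrite mem_Ap ?ntZ ?Sylow_neq1 // (subset_trans sZP (pHall_sub sylP)).
Qed.

End SylowMembership.

Section TrivialCoreCases.
Local Open Scope group_scope.
Variables (gT : finGroupType) (G : {group gT}) (p q a : nat).
Hypotheses (p_pr : prime p) (q_pr : prime q) (oG : #|G| = (p ^ a * q)%N).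
Hypotheses (pG : p %| #|G|) (D1 : 'O_p(G) = 1).

Lemma mul_syl_over_mem (X : {set {set gT}}) : {subset X <= Sp p G} ->
  (forall P : {group gT}, p.-Sylow(G) P -> gval P \in X) ->
  {in X, forall A : {set gT}, A * syl_over G p A \in X}.
Proof.
move=> X_Sp Syl_X _ /X_Sp/SpP[H [-> sHG pH _]]; have [sylQ sHQ] := syl_overP sHG pH.
by rewrite mulSGid // Syl_X.
Qed.

Lemma Sp_contractible_trivial_core : contractible (orbit_space G (Sp p G)).
Proof.
have Syl_Sp := Sylow_mem_Sp p_pr pG.
apply: (trivial_core_contractible p_pr q_pr oG D1 (F := id) (@memJ_Sp _ G p)) => //.
exact: mul_syl_over_mem.
Qed.

Lemma Bp_contractible_trivial_core : contractible (orbit_space G (Bp p G)).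
Proof.
have Syl_Bp := Sylow_mem_Bp p_pr pG; have Bp_Sp A : A \in Bp p G -> A \in Sp p G.
  by rewrite in_Bp => /andP[].
apply: (trivial_core_contractible p_pr q_pr oG D1 (F := id) (@memJ_Bp _ G p)) => //.
exact: mul_syl_over_mem.
Qed.

Lemma Ap_contractible_trivial_core : contractible (orbit_space G (Ap p G)).
Proof.
have Ap_Sp A : A \in Ap p G -> A \in Sp p G by rewrite in_Ap => /andP[].
apply: (trivial_core_contractible p_pr q_pr oG D1 (F := fun P => 'Ohm_1('Z(P))%G)
  (@memJ_Ap _ G p) Ap_Sp (Ohm1_center_Sylow_mem_Ap p_pr pG)).
- by move=> P g; rewrite /= centerJ OhmJ.
- exact: mul_Ohm1Z_syl_over_Ap.
Qed.

End TrivialCoreCases.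

Section NontrivialCore.
Local Open Scope group_scope.
Variables (gT : finGroupType) (G : {group gT}) (p : nat).
Local Notation D := 'O_p(G).
Hypothesis ntD : D != 1.

Lemma Sp_contractible_nontrivial_core : contractible (orbit_space G (Sp p G)).
Proof.
have DSp : gval D \in Sp p G by rewrite mem_Sp ?pcore_sub ?pcore_pgroup.
have D_eq := const_equivariant DSp (@pcoreJG _ G p).
have mulD_eq : equivariant_homo G (Sp p G) (fun A => A * D).
  split; [|by move=> A B _ _; apply: mulSg|by move=> A g _ gG; rewrite conjsMg pcoreJG].
  move=> _ /SpP[H [-> sHG pH ntH]].
  have nDH : H \subset 'N(D) := subset_trans sHG (normal_norm (pcore_normal p G)).
  rewrite -norm_joinEl // -[H <*> D]/(gval (H <*> D)%G); apply: mem_Sp.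
  - by rewrite join_subG sHG pcore_sub.
  - by rewrite /= norm_joinEl // pgroupM pH pcore_pgroup.
  - by apply: contra ntH => /eqP HD1; rewrite -subG1 -HD1 joing_subl.
apply: (orbit_space_contractible (@memJ_Sp _ G p) DSp mulD_eq D_eq D_eq D_eq).
- by move=> _ /SpP[H [-> _ _ _]]; rewrite subxx mulg_subl ?mulg_subr ?group1.
- by move=> A _; exists 1; rewrite ?conjsg1.
- by [].
Qed.

Lemma pcore_sub_radical (H : {group gT}) : H \subset G -> H :=: 'O_p('N_G(H)) -> D \subset H.
Proof.
move=> sHG Hrad; have pH : p.-group H by rewrite Hrad pcore_pgroup.
have sNDH : 'N_G(H) :&: D \subset H.
  rewrite {2}Hrad pcore_max ?(pgroupS (subsetIr _ _) (pcore_pgroup p G)) //.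
  exact: normalGI (subsetIl _ _) (pcore_normal _ _).
have nDH : H \subset 'N(D) := subset_trans sHG (normal_norm (pcore_normal p G)).
apply: contraT => nsDH.
have pHD : p.-group (H <*> D) by rewrite /= norm_joinEl // pgroupM pH pcore_pgroup.
have ltH_HD : H \proper H <*> D.
  by rewrite properEneq joing_subl andbT; apply: contra nsDH => /eqP->; rewrite joing_subr.
have := nilpotent_proper_norm (pgroup_nil pHD) ltH_HD.
rewrite properEneq => /andP[/eqP[]]; apply/eqP; rewrite eqEsubset subsetI.
rewrite (proper_sub ltH_HD) normG /=; apply/subsetP => x /setIP[].
rewrite norm_joinEl // => /mulsgP[h d hH dD ->] hdN.
have dN : d \in 'N(H) by rewrite -(groupMl _ (subsetP (normG H) _ hH)).
rewrite groupMl //; apply: (subsetP sNDH).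
by rewrite in_setI dD andbT in_setI (subsetP (pcore_sub p G)).
Qed.

Lemma Bp_contractible_nontrivial_core : contractible (orbit_space G (Bp p G)).
Proof.
have DBp : gval D \in Bp p G.
  rewrite in_Bp mem_Sp ?pcore_sub ?pcore_pgroup //=.
  by rewrite (setIidPl (normal_norm (pcore_normal p G))).
have id_eq : equivariant_homo G (Bp p G) id by split.
have D_eq := const_equivariant DBp (@pcoreJG _ G p).
apply: (orbit_space_contractible (@memJ_Bp _ G p) DBp id_eq id_eq id_eq D_eq).
- move=> A; rewrite in_Bp => /andP[/SpP[H [-> sHG _ _]] /eqP Hrad].
  by split; rewrite ?subxx //; apply: pcore_sub_radical.
- by move=> A _; exists 1; rewrite ?conjsg1.
- by [].
Qed.

End NontrivialCore.

Section ApNontrivialCore.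
Local Open Scope group_scope.
Variables (gT : finGroupType) (G : {group gT}) (p q a : nat).
Hypotheses (p_pr : prime p) (q_pr : prime q) (oG : #|G| = (p ^ a * q)%N).
Local Notation D := 'O_p(G).
Hypothesis ntD : D != 1.
Local Notation Zsyl A := ('Ohm_1('Z(syl_over G p A))).
Local Notation ZD := ('Ohm_1('Z(D))).

(* The zigzag [A <= A Z >= A Z :&: D <= (A Z :&: D) ZD >= ZD], with [Z] the [Omega_1] of the
   centre of the Sylow subgroup over [A]; subgroups of [D] are kept by the first two maps. *)
Definition mulZ (A : {set gT}) := if A \subset D then A else A * Zsyl A.
Definition mulZ_core (A : {set gT}) := if A \subset D then A else A * Zsyl A :&: D.
Definition mulZ_coreZ (A : {set gT}) := mulZ_core A * ZD.

Lemma ZD_facts : [/\ ZD \in Ap p G, ZD \subset G, p.-abelem ZD, D \subset 'C(ZD)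
  & forall g, g \in G -> ZD :^ g = ZD].
Proof.
have [sZD aZ cDZ ntZ] := Ohm1_center_pgroup (pcore_pgroup p G).
have sZG := subset_trans sZD (pcore_sub p G).
split => //; first by rewrite mem_Ap ?ntZ.
by move=> g gG; rewrite -OhmJ -centerJ pcoreJG.
Qed.

Lemma Ohm1_center_Sylow_meet_pcore (P : {group gT}) : p.-Sylow(G) P ->
  'Ohm_1('Z(P)) :&: D != 1.
Proof.
move=> sylP; have nsDP := normalS (pcore_sub_Hall sylP) (pHall_sub sylP) (pcore_normal p G).
have ntDZ := meet_center_nil (pgroup_nil (pHall_pgroup sylP)) nsDP ntD.
have : 'Ohm_1((D :&: 'Z(P))%G) != 1 :> {set gT} by rewrite Ohm1_eq1.
apply: contra => /eqP E; rewrite -subG1 -E subsetI OhmS ?subsetIr //=.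
exact: subset_trans (Ohm_sub 1 _) (subsetIl _ _).
Qed.

Lemma mulZ_core_group A : A \in Ap p G -> exists K : {group gT},
  [/\ mulZ_core A = K, K \subset D, p.-abelem K & K != 1 :> {set gT}].
Proof.
move=> AAp; have := mul_Ohm1Z_syl_over_Ap AAp; rewrite in_Ap => /andP[_ aHZ].
case/ApP: AAp aHZ => H [-> sHG ntH aH] aHZ; rewrite /mulZ_core; case: ifP => sHD.
  by exists H.
have [sylP sHP] := syl_overP sHG (abelem_pgroup aH).
have [_ _ cPZ _] := Ohm1_center_pgroup (pHall_pgroup sylP).
have HZE : H <*> Zsyl H = H * Zsyl H := cent_joinEl (subset_trans sHP cPZ).
exists ((H <*> Zsyl H) :&: D)%G; split; first by rewrite /= HZE.
- exact: subsetIr.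
- by apply: (@abelemS _ p _ (H <*> Zsyl H)%G (subsetIl _ _)); rewrite /= HZE.
apply: contra (Ohm1_center_Sylow_meet_pcore sylP) => /eqP E.
by rewrite -subG1 -E /= HZE setSI // mulg_subr ?group1.
Qed.

Lemma mulZ_equivariant : equivariant_homo G (Ap p G) mulZ.
Proof.
split.
- by move=> A AAp; rewrite /mulZ; case: ifP => // _; apply: mul_Ohm1Z_syl_over_Ap.
- move=> _ _ /ApP[H [-> sHG ntH aH]] /ApP[K [-> sKG ntK aK]] sHK; rewrite /mulZ.
  case: ifP => sHD; case: ifP => sKD //.
  + by rewrite (subset_trans sHK) ?mulg_subl ?group1.
  + by rewrite (subset_trans sHK sKD) in sHD.
  + by rewrite (syl_overS p_pr q_pr oG (negbT sHD) sHK sKG (abelem_pgroup aK)) mulSg.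
- move=> _ g /ApP[H [-> sHG ntH aH]] gG; rewrite /mulZ sub_pcoreJG //; case: ifP => // sHD.
  by rewrite conjsMg (syl_overJ p_pr q_pr oG (negbT sHD) sHG (abelem_pgroup aH) gG) /= centerJ OhmJ.
Qed.

Lemma mulZ_core_equivariant : equivariant_homo G (Ap p G) mulZ_core.
Proof.
split.
- move=> A /mulZ_core_group[K [-> sKD aK ntK]].
  by rewrite mem_Ap // (subset_trans sKD (pcore_sub p G)).
- move=> _ _ /ApP[H [-> sHG ntH aH]] /ApP[K [-> sKG ntK aK]] sHK; rewrite /mulZ_core.
  case: ifP => sHD; case: ifP => sKD //.
  + by rewrite subsetI sHD (subset_trans sHK) ?mulg_subl ?group1.
  + by rewrite (subset_trans sHK sKD) in sHD.
  + by rewrite (syl_overS p_pr q_pr oG (negbT sHD) sHK sKG (abelem_pgroup aK)) setSI ?mulSg.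
- move=> _ g /ApP[H [-> sHG ntH aH]] gG; rewrite /mulZ_core sub_pcoreJG //; case: ifP => // sHD.
  rewrite conjIg conjsMg (syl_overJ p_pr q_pr oG (negbT sHD) sHG (abelem_pgroup aH) gG).
  by rewrite /= centerJ OhmJ pcoreJG.
Qed.

Lemma mulZ_coreZ_equivariant : equivariant_homo G (Ap p G) mulZ_coreZ.
Proof.
have [_ sZG aZ cDZ ZDJ] := ZD_facts; have [_ core_homo coreJ] := mulZ_core_equivariant.
split; [|by move=> A B AAp BAp sAB; rewrite mulSg ?core_homo|].
  move=> A /mulZ_core_group[K [KE sKD aK ntK]]; rewrite /mulZ_coreZ KE.
  apply: (@mem_Ap_mulg _ _ _ K 'Ohm_1('Z(D))%G) => //.
    exact: subset_trans sKD (pcore_sub p G).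
  exact: subset_trans sKD cDZ.
by move=> A g AAp gG; rewrite /mulZ_coreZ conjsMg coreJ // ZDJ.
Qed.

Lemma Ap_contractible_nontrivial_core : contractible (orbit_space G (Ap p G)).
Proof.
have [ZDAp _ _ _ ZDJ] := ZD_facts.
apply: (orbit_space_contractible (@memJ_Ap _ G p) ZDAp mulZ_equivariant mulZ_core_equivariant
  mulZ_coreZ_equivariant (const_equivariant ZDAp ZDJ)).
- move=> A /mulZ_core_group[K [KE _ _ _]]; rewrite /mulZ_coreZ KE mulg_subl ?mulg_subr ?group1 //.
  by rewrite -KE /mulZ /mulZ_core; case: ifP; rewrite ?subsetIl ?mulg_subl ?group1.
- by move=> A _; exists 1; rewrite ?conjsg1.
- by [].
Qed.

End ApNontrivialCore.

Theorem proposition5p6 (gT : finGroupType) (G : {group gT}) (p q alpha : nat) :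
  prime p -> prime q -> #|G| = (p ^ alpha * q)%N -> p %| #|G| ->
  [/\ contractible (orbit_space G (Ap p G)),
      contractible (orbit_space G (Sp p G)) &
      contractible (orbit_space G (Bp p G))].
Proof.
move=> p_pr q_pr oG pG; have [D1|ntD] := eqVneq ('O_p(G) : {set gT})%g 1%g.
  split; [exact: Ap_contractible_trivial_core p_pr q_pr oG pG D1
         | exact: Sp_contractible_trivial_core p_pr q_pr oG pG D1
         | exact: Bp_contractible_trivial_core p_pr q_pr oG pG D1].
split; [exact: Ap_contractible_nontrivial_core p_pr q_pr oG ntD
       | exact: Sp_contractible_nontrivial_core ntD
       | exact: Bp_contractible_nontrivial_core ntD].
Qed.
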